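(* Fix $n$, $m$, a scoring vector $s$ and a distribution $\Psi$ over preference profiles, and suppose there is a function $u$ such that for every vector $k=(k_1,\ldots,k_n)$ of non-negative integers with $\sum_i k_i=m$ and every $i\in[n]$, $EU^k_\Psi(a_i)=u\big(k_i,\sum_{j<i}k_j\big)$. Then among the vectors $k$ maximizing the egalitarian social welfare $SW^e_\Psi(k)=\min_{a}EU^k_\Psi(a)$ there is one that is non-decreasing, i.e. $k_1\le k_2\le\cdots\le k_n$.
   Context: There are $n$ agents $a_1,\ldots,a_n$ and $m$ items. A preference profile assigns to each agent a strict ranking of the items. A scoring vector is $s=(s_1,\ldots,s_m)$ of non-negative rationals with $s_1\ge\cdots\ge s_m$; an agent's value for her $j$-th preferred item is $s_j$, and utilities are additive. Given $k=(k_1,\ldots,k_n)$ with non-negative integer entries summing to $m$, agent $a_1$ first picks $k_1$ items, then $a_2$ picks $k_2$ of the remaining items, etc., each agent greedily picking her most preferred remaining items. $U^k_P(a)$ is the total score of the items agent $a$ receives under profile $P$, and $EU^k_\Psi(a)=\mathbb{E}_{P\sim\Psi}[U^k_P(a)]$. *)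

From HB Require Import structures.
From mathcomp Require Import all_boot all_order all_algebra all_fingroup.
Set Implicit Arguments. Unset Strict Implicit. Unset Printing Implicit Defensive.
Import Order.TTheory GRing.Theory Num.Theory.
Local Open Scope ring_scope.

(* Agents are 'I_n (agent a_{i+1} is i), items are 'I_m.
   A ranking is a permutation sigma : {perm 'I_m}, where sigma j is the
   agent's (j+1)-th preferred item; so an item x has rank (sigma^-1 x). *)
Definition profile (n m : nat) := {ffun 'I_n -> {perm 'I_m}}.

Definition scoring_vector (m : nat) (s : 'I_m -> rat) : Prop :=
  (forall j, 0 <= s j) /\ (forall j j' : 'I_m, (j <= j')%N -> s j' <= s j).

Definition distribution (n m : nat) (Psi : profile n m -> rat) : Prop :=
  (forall P, 0 <= Psi P) /\ \sum_(P : profile n m) Psi P = 1.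

Definition picks (m : nat) (sigma : {perm 'I_m}) (R : {set 'I_m}) (c : nat)
  : {set 'I_m} :=
  [set x in take c [seq sigma j | j <- enum 'I_m & sigma j \in R]].

Fixpoint alloc_aux (n m : nat) (P : profile n m) (k : 'I_n -> nat)
    (l : seq 'I_n) (R : {set 'I_m}) : seq {set 'I_m} :=
  match l with
  | [::] => [::]
  | i :: l' => let B := picks (P i) R (k i) in B :: alloc_aux P k l' (R :\: B)
  end.

Definition bundle (n m : nat) (P : profile n m) (k : 'I_n -> nat) (i : 'I_n)
  : {set 'I_m} :=
  nth set0 (alloc_aux P k (enum 'I_n) setT) i.

Definition U (n m : nat) (s : 'I_m -> rat) (P : profile n m) (k : 'I_n -> nat)
    (i : 'I_n) : rat :=
  \sum_(x in bundle P k i) s ((P i)^-1 x)%g.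

Definition EU (n m : nat) (s : 'I_m -> rat) (Psi : profile n m -> rat)
    (k : 'I_n -> nat) (i : 'I_n) : rat :=
  \sum_(P : profile n m) Psi P * U s P k i.

(* egalitarian social welfare: min over agents of EU (0 if there are no agents) *)
Definition SWe (n m : nat) (s : 'I_m -> rat) (Psi : profile n m -> rat)
    (k : 'I_n -> nat) : rat :=
  match [seq EU s Psi k i | i <- enum 'I_n] with
  | [::] => 0
  | x :: xs => foldr Num.min x xs
  end.

Definition valid_k {n : nat} (m : nat) (k : 'I_n -> nat) : Prop :=
  (\sum_(i < n) k i)%N = m.

Definition nondecreasing_k (n : nat) (k : 'I_n -> nat) : Prop :=
  forall i j : 'I_n, (i <= j)%N -> (k i <= k j)%N.

From HB Require Import structures.
From mathcomp Require Import all_boot all_order all_algebra all_fingroup.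
From mathcomp Require Import zify.
From Stdlib Require Import FunctionalExtensionality.
Set Implicit Arguments. Unset Strict Implicit. Unset Printing Implicit Defensive.
Import Order.TTheory GRing.Theory Num.Theory.
Local Open Scope ring_scope.

(* Take an optimal [k] of maximal potential [sum_j j * k_j].  If
   [k_i > k_{i+1}] for some [i], swap these two quotas.  Agents other than
   [i, i+1] keep their quota and the number of items picked before them, hence
   their expected utility.  Agent [i+1] now picks more items after an agent who
   picks fewer.  Agent [i] gets quota [k_{i+1}] one slot earlier; comparing with
   the vector where agent [i-1] absorbs the quota of agent [i] (which [u] does
   not distinguish from [k] at that slot) shows she is not worse off than agent
   [i+1] was.  So the swap is still optimal with a larger potential, a
   contradiction. *)

Section PrefixSums.
Variables (T : eqType) (f : T -> rat).

Lemma sum_take_succ_le (b : rat) (X : seq T) (c : nat) :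
  0 <= b -> (forall x, x \in X -> f x <= b) ->
  \sum_(x <- take c.+1 X) f x <= \sum_(x <- take c X) f x + b.
Proof.
move=> b_ge0; elim: X c => [|x X IH] c X_le_b; first by rewrite big_nil add0r.
case: c => [|c] /=.
  by rewrite take0 !big_cons !big_nil add0r addr0 X_le_b ?mem_head.
rewrite !big_cons -addrA lerD2l IH // => y y_in; apply: X_le_b.
by rewrite inE y_in orbT.
Qed.

Hypothesis f_ge0 : forall x, 0 <= f x.

(* Taking the [c] first entries of a sublist selected by [p] collects at most
   the weight of the [c] first entries of a non-increasing list: this is why
   picking greedily from fewer remaining items can only hurt. *)
Lemma sum_take_filter_le (p : pred T) (L : seq T) (c : nat) :
  pairwise (fun a b => f b <= f a) L ->
  \sum_(x <- take c (filter p L)) f x <= \sum_(x <- take c L) f x.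
Proof.
elim: L c => [|a L IH] [|c] //= /andP[/allP a_max L_noninc].
  by rewrite !take0 !big_nil.
case: (p a) => /=; first by rewrite !big_cons lerD2l IH.
rewrite big_cons addrC.
apply: le_trans (sum_take_succ_le (X := filter p L) c (f_ge0 a) _) _.
  by move=> x; rewrite mem_filter => /andP[_ /a_max].
by rewrite lerD2r IH.
Qed.

Lemma sum_take_mono (L : seq T) (c c' : nat) : (c <= c')%N ->
  \sum_(x <- take c L) f x <= \sum_(x <- take c' L) f x.
Proof.
move=> /subnKC <-; rewrite takeD big_cat lerDl.
by apply: sumr_ge0 => x _.
Qed.

End PrefixSums.

Section GreedyValue.
Variables (m : nat) (s : 'I_m -> rat).

Definition ranks (sg : {perm 'I_m}) (R : {set 'I_m}) : seq 'I_m :=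
  [seq j <- enum 'I_m | sg j \in R].

Definition topval (sg : {perm 'I_m}) (R : {set 'I_m}) (c : nat) : rat :=
  \sum_(j <- take c (ranks sg R)) s j.

Lemma picks_topval (sg : {perm 'I_m}) (R : {set 'I_m}) (c : nat) :
  \sum_(x in picks sg R c) s ((sg^-1)%g x) = topval sg R c.
Proof.
rewrite /picks /topval.
have -> : [seq sg j | j <- enum 'I_m & sg j \in R] = map sg (ranks sg R) by [].
rewrite -map_take.
have uniq_picked : uniq (map sg (take c (ranks sg R))).
  by rewrite (map_inj_uniq (@perm_inj _ sg)) take_uniq // filter_uniq // enum_uniq.
rewrite (eq_bigl (mem (map sg (take c (ranks sg R))))) => [|x]; last by rewrite inE.
rewrite -(big_uniq _ uniq_picked) big_map.
by apply: eq_bigr => j _; rewrite permK.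
Qed.

Lemma picks_mono (sg : {perm 'I_m}) (R : {set 'I_m}) (c c' : nat) :
  (c <= c')%N -> picks sg R c \subset picks sg R c'.
Proof.
move=> le_cc'; apply/subsetP => x; rewrite !inE -(take_takel _ le_cc').
exact: mem_take.
Qed.

Hypothesis s_scoring : scoring_vector s.

Let s_ge0 : forall j, 0 <= s j. Proof. by case: s_scoring. Qed.

Lemma scores_noninc : pairwise (fun a b => s b <= s a) (enum 'I_m).
Proof.
have ranks_increasing : pairwise (relpre val ltn) (enum 'I_m).
  rewrite -pairwise_map val_enum_ord -sorted_pairwise ?iota_ltn_sorted //.
  exact: ltn_trans.
by apply: sub_pairwise ranks_increasing => a b /ltnW; case: s_scoring => _; apply.
Qed.

Lemma topval_subset (sg : {perm 'I_m}) (R R' : {set 'I_m}) (c : nat) :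
  R' \subset R -> topval sg R' c <= topval sg R c.
Proof.
move=> sub_R'R; rewrite /topval.
have -> : ranks sg R' = [seq j <- ranks sg R | sg j \in R'].
  rewrite /ranks -filter_predI; apply: eq_filter => j /=.
  by case: (boolP (sg j \in R')) => //= /(subsetP sub_R'R) ->.
by apply: sum_take_filter_le => //; apply: pairwise_filter; apply: scores_noninc.
Qed.

Lemma topval_first (sg sg' : {perm 'I_m}) (R : {set 'I_m}) (c : nat) :
  topval sg' R c <= topval sg setT c.
Proof.
rewrite /topval; have -> : ranks sg setT = enum 'I_m.
  by rewrite /ranks (eq_filter (a2 := predT)) ?filter_predT // => j; rewrite inE.
by apply: sum_take_filter_le => //; apply: scores_noninc.
Qed.

Lemma topval_mono (sg : {perm 'I_m}) (R : {set 'I_m}) (c c' : nat) :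
  (c <= c')%N -> topval sg R c <= topval sg R c'.
Proof. exact: sum_take_mono. Qed.

End GreedyValue.

Fixpoint rest_after (n m : nat) (P : profile n m) (k : 'I_n -> nat)
    (l : seq 'I_n) (R : {set 'I_m}) (t : nat) : {set 'I_m} :=
  match l, t with
  | i :: l', t'.+1 => rest_after P k l' (R :\: picks (P i) R (k i)) t'
  | _, _ => R
  end.

Definition remaining (n m : nat) (P : profile n m) (k : 'I_n -> nat) (t : nat)
  : {set 'I_m} :=
  rest_after P k (enum 'I_n) setT t.

Section Remaining.
Variables (n m : nat) (P : profile n m).

Lemma nth_alloc_aux (k : 'I_n -> nat) (l : seq 'I_n) (R : {set 'I_m})
    (t : nat) (i0 : 'I_n) : (t < size l)%N ->
  nth set0 (alloc_aux P k l R) t =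
  picks (P (nth i0 l t)) (rest_after P k l R t) (k (nth i0 l t)).
Proof. by elim: l R t => [|a l IH] R [|t] //= lt_t; rewrite IH. Qed.

Lemma rest_after_succ (k : 'I_n -> nat) (l : seq 'I_n) (R : {set 'I_m})
    (t : nat) (i0 : 'I_n) : (t < size l)%N ->
  rest_after P k l R t.+1 = rest_after P k l R t :\:
    picks (P (nth i0 l t)) (rest_after P k l R t) (k (nth i0 l t)).
Proof.
elim: l R t => [|a l IH] R [|t] //= lt_t; first by case: l {IH lt_t}.
by rewrite IH.
Qed.

Lemma rest_after_agree (k k' : 'I_n -> nat) (l : seq 'I_n) (R : {set 'I_m})
    (t : nat) :
  (forall j, j \in take t l -> k j = k' j) ->
  rest_after P k l R t = rest_after P k' l R t.
Proof.
elim: l R t => [|a l IH] R [|t] //= k_k'; rewrite k_k' ?mem_head //.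
by apply: IH => j j_in; apply: k_k'; rewrite inE j_in orbT.
Qed.

Lemma nth_enum_ord_self (i : 'I_n) : nth i (enum 'I_n) i = i.
Proof. by apply: val_inj; rewrite /= nth_enum_ord. Qed.

Lemma bundle_picks (k : 'I_n -> nat) (i : 'I_n) :
  bundle P k i = picks (P i) (remaining P k i) (k i).
Proof.
by rewrite /bundle (nth_alloc_aux _ _ i) ?size_enum_ord // nth_enum_ord_self.
Qed.

Lemma remaining0 (k : 'I_n -> nat) : remaining P k 0 = setT.
Proof. by rewrite /remaining; case: (enum 'I_n). Qed.

Lemma remaining_succ (k : 'I_n -> nat) (i i1 : 'I_n) : (i1 : nat) = i.+1 ->
  remaining P k i1 = remaining P k i :\: picks (P i) (remaining P k i) (k i).
Proof.
move=> i1_succ; rewrite /remaining i1_succ (rest_after_succ _ _ i);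
  by rewrite ?size_enum_ord ?nth_enum_ord_self.
Qed.

Lemma remaining_agree (k k' : 'I_n -> nat) (t : nat) :
  (forall j : 'I_n, (j < t)%N -> k j = k' j) ->
  remaining P k t = remaining P k' t.
Proof.
move=> k_k'; apply: rest_after_agree => j; rewrite in_take ?mem_enum //.
by rewrite index_enum_ord; apply: k_k'.
Qed.

End Remaining.

Lemma U_topval (n m : nat) (s : 'I_m -> rat) (P : profile n m)
    (k : 'I_n -> nat) (i : 'I_n) :
  U s P k i = topval s (P i) (remaining P k i) (k i).
Proof. by rewrite /U bundle_picks picks_topval. Qed.

Section UtilityComparison.
Variables (n m : nat) (s : 'I_m -> rat) (P : profile n m).
Hypothesis s_scoring : scoring_vector s.

Lemma U_le_after_lighter_predecessor (k k' : 'I_n -> nat) (i i1 : 'I_n) :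
  (i1 : nat) = i.+1 -> (forall j : 'I_n, (j < i)%N -> k j = k' j) ->
  (k' i <= k i)%N -> (k i1 <= k' i1)%N -> U s P k i1 <= U s P k' i1.
Proof.
move=> i1_succ agree le_i le_i1.
rewrite !U_topval !(remaining_succ _ _ i1_succ) (remaining_agree P agree).
apply: le_trans (topval_mono s_scoring _ _ le_i1).
by apply: topval_subset => //; apply: setDS; apply: picks_mono.
Qed.

Lemma U_le_first (k k' : 'I_n -> nat) (i i0 : 'I_n) :
  (i0 : nat) = 0%N -> (k i <= k' i0)%N -> U s P k i <= U s P k' i0.
Proof.
move=> i0_first le_quota; rewrite !U_topval i0_first remaining0.
apply: le_trans (topval_first s_scoring _ _ _ _) _.
exact: topval_mono.
Qed.

End UtilityComparison.

Lemma EU_le (n m : nat) (s : 'I_m -> rat) (Psi : profile n m -> rat)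
    (k k' : 'I_n -> nat) (i i' : 'I_n) :
  distribution Psi -> (forall P, U s P k i <= U s P k' i') ->
  EU s Psi k i <= EU s Psi k' i'.
Proof. by move=> [Psi_ge0 _] le_U; apply: ler_sum => P _; apply: ler_wpM2l. Qed.

Lemma foldr_min_le (x y : rat) (xs : seq rat) :
  y \in x :: xs -> foldr Num.min x xs <= y.
Proof.
elim: xs => [|z xs IH] /=; first by rewrite inE => /eqP->.
rewrite ge_min; have [->|y_ne_z] := eqVneq y z; first by rewrite lexx.
by rewrite !inE (negbTE y_ne_z) /= => y_in; rewrite IH ?orbT // inE.
Qed.

Lemma foldr_min_ge (x z : rat) (xs : seq rat) :
  (forall y, y \in x :: xs -> z <= y) -> z <= foldr Num.min x xs.
Proof.
elim: xs => [|y xs IH] /= z_le; first by rewrite z_le ?mem_head.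
rewrite le_min z_le ?(inE, eqxx, orbT) //= IH // => w.
rewrite inE => /orP[/eqP->|w_in].
  by rewrite z_le ?mem_head.
by rewrite z_le // !inE w_in !orbT.
Qed.

Lemma SWe_le_EU (n m : nat) (s : 'I_m -> rat) (Psi : profile n m -> rat)
    (k : 'I_n -> nat) (i : 'I_n) :
  SWe s Psi k <= EU s Psi k i.
Proof.
rewrite /SWe; have : EU s Psi k i \in [seq EU s Psi k j | j <- enum 'I_n].
  by apply: map_f; rewrite mem_enum.
by case: [seq _ | _ <- _] => [//|x xs]; apply: foldr_min_le.
Qed.

Lemma SWe_ge (n m : nat) (s : 'I_m -> rat) (Psi : profile n m -> rat)
    (k : 'I_n -> nat) (z : rat) :
  (0 < n)%N -> (forall i, z <= EU s Psi k i) -> z <= SWe s Psi k.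
Proof.
move=> n_gt0 z_le; rewrite /SWe.
have : (0 < size [seq EU s Psi k j | j <- enum 'I_n])%N by rewrite size_map size_enum_ord.
have lb : forall y, y \in [seq EU s Psi k j | j <- enum 'I_n] -> z <= y.
  by move=> y /mapP[j _ ->].
by case: [seq _ | _ <- _] lb => [//|x xs] lb _; apply: foldr_min_ge.
Qed.

Definition swap (n : nat) (k : 'I_n -> nat) (a b : 'I_n) : 'I_n -> nat :=
  fun j => k (tperm a b j).

Definition transfer (n : nat) (k : 'I_n -> nat) (a b : 'I_n) : 'I_n -> nat :=
  fun j => if j == a then (k a + k b)%N else if j == b then 0%N else k j.

(* A potential that strictly increases when an adjacent inversion is swapped. *)
Definition potential (n : nat) (k : 'I_n -> nat) : nat := \sum_(j < n) j * k j.

Section QuotaSums.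
Variable n : nat.

Lemma ord_eqE (a b : 'I_n) : (a == b) = ((a : nat) == b).
Proof. by rewrite -(inj_eq val_inj). Qed.

Lemma big_two_points (f g : 'I_n -> nat) (a b : 'I_n) : a != b ->
  (forall j, j != a -> j != b -> f j = g j) ->
  (\sum_(j < n) f j + (g a + g b) = \sum_(j < n) g j + (f a + f b))%N.
Proof.
move=> a_ne_b f_g.
have split_ab (h : 'I_n -> nat) :
    (\sum_(j < n) h j = h a + (h b + \sum_(j | (j != a) && (j != b)) h j))%N.
  by rewrite (bigD1 a) // (bigD1 b) 1?eq_sym //=; under eq_bigl do rewrite andbC.
have f_g_off : (\sum_(j | (j != a) && (j != b)) f j =
                \sum_(j | (j != a) && (j != b)) g j)%N.
  by apply: eq_bigr => j /andP[]; apply: f_g.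
rewrite (split_ab f) (split_ab g) f_g_off; lia.
Qed.

Lemma prefix_sum_succ (F : 'I_n -> nat) (i i1 : 'I_n) : (i1 : nat) = i.+1 ->
  (\sum_(j < n | (j < i1)%N) F j = \sum_(j < n | (j < i)%N) F j + F i)%N.
Proof.
move=> i1_succ; rewrite (bigD1 i) ?i1_succ //= addnC; congr (_ + _)%N.
by apply: eq_bigl => j; rewrite ltnS [(j < i)%N]ltn_neqAle ord_eqE andbC.
Qed.

Lemma swap_sum (k : 'I_n -> nat) (a b : 'I_n) :
  (\sum_(j < n) swap k a b j = \sum_(j < n) k j)%N.
Proof. by rewrite [RHS](reindex_inj (@perm_inj _ (tperm a b))). Qed.

Lemma transfer_sum (k : 'I_n -> nat) (a b : 'I_n) : a != b ->
  (\sum_(j < n) transfer k a b j = \sum_(j < n) k j)%N.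
Proof.
move=> a_ne_b; have agree_off j : j != a -> j != b -> transfer k a b j = k j.
  by rewrite /transfer => /negbTE-> /negbTE->.
have transfer_a : transfer k a b a = (k a + k b)%N by rewrite /transfer eqxx.
have transfer_b : transfer k a b b = 0%N.
  by rewrite /transfer eq_sym (negbTE a_ne_b) eqxx.
have := big_two_points a_ne_b agree_off.
by rewrite transfer_a transfer_b addn0 => /addIn.
Qed.

Lemma prefix_sum_swap_other (k : 'I_n -> nat) (a b j : 'I_n) :
  (b : nat) = a.+1 -> j != a -> j != b ->
  (\sum_(l < n | (l < j)%N) swap k a b l = \sum_(l < n | (l < j)%N) k l)%N.
Proof.
move=> b_succ j_ne_a j_ne_b.
rewrite [RHS](reindex_inj (@perm_inj _ (tperm a b))); apply: eq_bigl => l /=.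
move: j_ne_a j_ne_b; rewrite !ord_eqE b_succ => j_ne_a j_ne_b.
by case: tpermP => [->|->|//]; rewrite b_succ; apply/idP/idP; lia.
Qed.

Lemma potential_swap (k : 'I_n -> nat) (a b : 'I_n) :
  (b : nat) = a.+1 -> (k b < k a)%N -> (potential k < potential (swap k a b))%N.
Proof.
move=> b_succ inversion.
have a_ne_b : a != b by rewrite ord_eqE b_succ; lia.
have swap_off j : j != a -> j != b -> (j * swap k a b j = j * k j)%N.
  by move=> j_ne_a j_ne_b; rewrite /swap tpermD // eq_sym.
have := big_two_points a_ne_b swap_off.
rewrite /potential /swap tpermL tpermR b_succ; nia.
Qed.

End QuotaSums.

Section PositionalUtilities.
Variables (n m : nat) (s : 'I_m -> rat) (Psi : profile n m -> rat).
Variable u : nat -> nat -> rat.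
Hypotheses (s_scoring : scoring_vector s) (Psi_distr : distribution Psi).
Hypothesis EU_u : forall k : 'I_n -> nat, valid_k m k ->
  forall i : 'I_n, EU s Psi k i = u (k i) (\sum_(j < n | (j < i)%N) k j)%N.

(* For the first slot this is pointwise; in
   general, [EU k i1] is also the expected utility of slot [i] in the vector
   where agent [i-1] absorbed the quota of agent [i], and there agent [i-1]
   picks more than under [k'], leaving less for slot [i]. *)
Lemma EU_le_move_forward (k k' : 'I_n -> nat) (i i1 : 'I_n) :
  valid_k m k -> (i1 : nat) = i.+1 ->
  (forall j : 'I_n, (j < i)%N -> k' j = k j) -> k' i = k i1 ->
  EU s Psi k i1 <= EU s Psi k' i.
Proof.
move=> valid_k_k i1_succ k'_below k'_i.
case i_pred: (i : nat) => [|ip].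
  by apply: EU_le => // P; apply: U_le_first; rewrite ?k'_i.
have ip_lt : (ip < n)%N by rewrite (ltn_trans _ (ltn_ord i)) ?i_pred.
pose ipo := Ordinal ip_lt; have i_succ : (i : nat) = ipo.+1 by [].
have [ipo_ne_i ipo_ne_i1 i_ne_i1] : [/\ ipo != i, ipo != i1 & i != i1].
  by rewrite !ord_eqE /= i1_succ i_pred; split; lia.
pose k'' := transfer (swap k i i1) ipo i1.
have k''_below (j : 'I_n) : (j < ipo)%N -> k'' j = k j.
  move=> j_lt; have [ipo_ne_j i_ne_j i1_ne_j] : [/\ ipo != j, i != j & i1 != j].
    by rewrite !ord_eqE /= i1_succ i_pred; split; lia.
  rewrite /k'' /transfer !(eq_sym j) (negbTE ipo_ne_j) (negbTE i1_ne_j).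
  by rewrite /swap tpermD.
have k''_ipo : k'' ipo = (k ipo + k i)%N.
  by rewrite /k'' /transfer eqxx /swap tpermR tpermD // eq_sym.
have k''_i : k'' i = k i1.
  rewrite /k'' /transfer eq_sym (negbTE ipo_ne_i) (negbTE i_ne_i1).
  by rewrite /swap tpermL.
have valid_k'' : valid_k m k''.
  by rewrite /valid_k transfer_sum // swap_sum.
have -> : EU s Psi k i1 = EU s Psi k'' i.
  rewrite !EU_u // k''_i !(prefix_sum_succ _ i_succ) (prefix_sum_succ _ i1_succ).
  rewrite (prefix_sum_succ _ i_succ) k''_ipo addnA; congr (u _ (_ + _ + _)).
  by apply: eq_bigr => j /k''_below.
apply: EU_le => // P; apply: (U_le_after_lighter_predecessor P s_scoring i_succ).
- by move=> j j_lt; rewrite k''_below ?k'_below // i_succ (ltn_trans j_lt).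
- by rewrite k''_ipo k'_below ?i_succ // leq_addr.
- by rewrite k''_i k'_i.
Qed.

Section AdjacentSwap.
Variables (k : 'I_n -> nat) (i i1 : 'I_n).
Hypotheses (valid_k_k : valid_k m k) (i1_succ : (i1 : nat) = i.+1).
Hypothesis inversion : (k i1 < k i)%N.

Lemma swap_valid : valid_k m (swap k i i1).
Proof. by rewrite /valid_k swap_sum. Qed.

Lemma EU_swap_other (j : 'I_n) : j != i -> j != i1 ->
  EU s Psi (swap k i i1) j = EU s Psi k j.
Proof.
move=> j_ne_i j_ne_i1; rewrite (EU_u swap_valid) (EU_u valid_k_k).
rewrite prefix_sum_swap_other //.
by rewrite /swap tpermD // eq_sym.
Qed.

Lemma EU_swap_later : EU s Psi k i1 <= EU s Psi (swap k i i1) i1.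
Proof.
apply: EU_le => // P; apply: (U_le_after_lighter_predecessor P s_scoring i1_succ).
- move=> j j_lt; rewrite /swap tpermD // ord_eqE /=; lia.
- by rewrite /swap tpermL ltnW.
- by rewrite /swap tpermR ltnW.
Qed.

Lemma EU_swap_earlier : EU s Psi k i1 <= EU s Psi (swap k i i1) i.
Proof.
apply: EU_le_move_forward => //; last by rewrite /swap tpermL.
by move=> j j_lt; rewrite /swap tpermD // ord_eqE /=; lia.
Qed.

Lemma SWe_swap : SWe s Psi k <= SWe s Psi (swap k i i1).
Proof.
apply: SWe_ge => [|j]; first exact: leq_ltn_trans (leq0n _) (ltn_ord i).
have [->|j_ne_i1] := eqVneq j i1.
  exact: le_trans (SWe_le_EU _ _ _ i1) EU_swap_later.
have [->|j_ne_i] := eqVneq j i.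
  exact: le_trans (SWe_le_EU _ _ _ i1) EU_swap_earlier.
by rewrite EU_swap_other // SWe_le_EU.
Qed.

End AdjacentSwap.
End PositionalUtilities.

Lemma adjacent_nondecreasing (n : nat) (k : 'I_n -> nat) :
  (forall i i1 : 'I_n, (i1 : nat) = i.+1 -> (k i <= k i1)%N) -> nondecreasing_k k.
Proof.
move=> adjacent_le.
suff steps d (i j : 'I_n) : (j : nat) = (i + d)%N -> (k i <= k j)%N.
  by move=> i j le_ij; apply: (steps (j - i)%N); rewrite subnKC.
elim: d j => [|d IH] j j_eq; first by rewrite addn0 in j_eq; rewrite (val_inj j_eq).
have jp_lt : (i + d < n)%N by rewrite -ltnS -addnS -j_eq ltnS ltnW.
apply: leq_trans (IH (Ordinal jp_lt) erefl) (adjacent_le _ _ _).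
by rewrite j_eq addnS.
Qed.

(* Valid quota vectors are finitely many: they are encoded by finite
   functions into ['I_m.+1]. *)
Definition quota_of (n m : nat) (f : {ffun 'I_n -> 'I_m.+1}) : 'I_n -> nat :=
  fun j => f j.

Lemma quota_encode (n m : nat) (k : 'I_n -> nat) : valid_k m k ->
  exists f : {ffun 'I_n -> 'I_m.+1}, quota_of f = k.
Proof.
move=> valid_k_k; exists [ffun j => inord (k j)].
apply: functional_extensionality => j; rewrite /quota_of ffunE inordK //.
by rewrite ltnS -valid_k_k (bigD1 j) //= leq_addr.
Qed.

Lemma valid_exists (n m : nat) : (0 < n)%N -> exists k : 'I_n -> nat, valid_k m k.
Proof.
move=> n_gt0; pose i0 := Ordinal n_gt0.
exists (fun j => if j == i0 then m else 0%N).
by rewrite /valid_k (bigD1 i0) //= ?eqxx big1 ?addn0 // => j /negbTE->.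
Qed.

(* Among the optimal vectors, one of maximal potential has no adjacent
   inversion, since swapping one keeps it optimal and raises the potential. *)
Theorem proposition1 (n m : nat) (s : 'I_m -> rat)
    (Psi : profile n m -> rat) (u : nat -> nat -> rat) :
  (0 < n)%N ->
  scoring_vector s ->
  distribution Psi ->
  (forall k : 'I_n -> nat, valid_k m k ->
     forall i : 'I_n, EU s Psi k i = u (k i) (\sum_(j < n | (j < i)%N) k j)%N) ->
  exists k : 'I_n -> nat,
    [/\ valid_k m k,
        (forall k' : 'I_n -> nat, valid_k m k' -> SWe s Psi k' <= SWe s Psi k)
      & nondecreasing_k k].
Proof.
move=> n_gt0 s_scoring Psi_distr EU_u.
(* Optimize over the finitely many encoded vectors: first the welfare [SW],
   then the potential among the optimal ones. *)
pose valid (f : {ffun 'I_n -> 'I_m.+1}) := (\sum_(i < n) quota_of f i == m)%N.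
pose SW (f : {ffun 'I_n -> 'I_m.+1}) := SWe s Psi (quota_of f).
have [f0 valid_f0] : exists f, valid f.
  by have [k /[dup] valid_k_k /quota_encode [f f_k]] := valid_exists m n_gt0;
    exists f; rewrite /valid f_k valid_k_k.
have [f1 valid_f1 f1_max] := arg_maxP SW valid_f0.
have f1_opt k' : valid_k m k' -> SWe s Psi k' <= SW f1.
  move=> valid_k'; have [f' f'_k] := quota_encode valid_k'.
  by rewrite -f'_k; apply: f1_max; rewrite /valid f'_k valid_k'.
pose optimal f := valid f && (SW f1 <= SW f).
have optimal_f1 : optimal f1 by rewrite /optimal valid_f1 lexx.
have [f2 /andP[valid_f2 opt_f2] f2_max] :=
  arg_maxP (fun f => potential (quota_of f)) optimal_f1.
exists (quota_of f2); split; first exact/eqP.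
  by move=> k' /f1_opt /le_trans; apply.
apply: adjacent_nondecreasing => i i1 i1_succ.
rewrite leqNgt; apply/negP => inversion.
have valid_k2 : valid_k m (quota_of f2) by apply/eqP.
have [f' f'_swap] := quota_encode (swap_valid i i1 valid_k2).
have : optimal f'.
  rewrite /optimal /valid /SW f'_swap (swap_valid i i1 valid_k2) eqxx /=.
  have := SWe_swap s_scoring Psi_distr EU_u valid_k2 i1_succ inversion.
  exact: le_trans opt_f2.
move=> /f2_max /=; rewrite f'_swap leEnat leqNgt.
by rewrite (potential_swap i1_succ inversion).
Qed.
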